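(* Let $G=\mathrm{srg}(n,k,\lambda,\mu)$ be a strongly regular graph with $\mu\ge1$. If $2k+(n-1)(\lambda-\mu)\neq0$, then $\mathrm{QEC}(G)$ is a non-negative integer.
   Context: A graph $G=(V,E)$ is finite and simple. It is strongly regular with parameters $\mathrm{srg}(n,k,\lambda,\mu)$ if $|V|=n$, every vertex has exactly $k$ neighbours, every two adjacent vertices have exactly $\lambda$ common neighbours, and every two distinct non-adjacent vertices have exactly $\mu$ common neighbours. The hypothesis $\mu\ge1$ means in particular that there exist distinct non-adjacent vertices (so $G$ is not complete) and that $G$ is connected. For a connected graph $G=(V,E)$ with $|V|\ge2$, let $D=[d(x,y)]_{x,y\in V}$ be its distance matrix ($d$ the graph distance), and define the quadratic embedding constant \[ \mathrm{QEC}(G)=\max\{\langle f,Df\rangle : f\in\mathbb{R}^V,\ \langle f,f\rangle=1,\ \langle \mathbf{1},f\rangle=0\}, \] where $\mathbf 1$ is the all-ones vector and $\langle\cdot,\cdot\rangle$ the standard inner product. *)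

From HB Require Import structures.
From mathcomp Require Import all_boot all_order all_algebra.
From mathcomp Require Import all_classical all_reals.
Set Implicit Arguments. Unset Strict Implicit. Unset Printing Implicit Defensive.
Import Order.TTheory GRing.Theory Num.Theory.
Local Open Scope ring_scope.
Local Open Scope classical_set_scope.

Definition simple_graph (T : finType) (e : rel T) : Prop :=
  (forall x y, e x y = e y x) /\ (forall x, ~~ e x x).

Fixpoint reach (T : finType) (e : rel T) (k : nat) (x y : T) : bool :=
  match k with
  | 0 => x == y
  | k'.+1 => reach e k' x y || [exists z, reach e k' x z && e z y]
  end.

(* graph distance: least k with a walk of length <= k from x to y
   (for a connected graph on T, the distance is < #|T|, so the search
   over 0..#|T|-1 finds it) *)
Definition gdist (T : finType) (e : rel T) (x y : T) : nat :=
  find (fun k => reach e k x y) (iota 0 #|T|).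

Definition strongly_regular (T : finType) (e : rel T) (n k lam mu : nat) : Prop :=
  simple_graph e /\ #|T| = n /\
  (forall x, #|[set y | e x y]| = k) /\
  (forall x y, x != y -> e x y -> #|[set z | e x z && e y z]| = lam) /\
  (forall x y, x != y -> ~~ e x y -> #|[set z | e x z && e y z]| = mu).

Definition distQ (R : realType) (T : finType) (e : rel T) (f : T -> R) : R :=
  \sum_(x : T) \sum_(y : T) (gdist e x y)%:R * f x * f y.

Definition QEC (R : realType) (T : finType) (e : rel T) : R :=
  sup [set q : R | exists f : T -> R,
         \sum_(x : T) f x * f x = 1 /\ \sum_(x : T) f x = 0 /\ q = distQ e f].

From HB Require Import structures.
From mathcomp Require Import all_boot all_order all_algebra.
From mathcomp Require Import all_classical all_reals.
From mathcomp Require Import zify ring lra.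
Set Implicit Arguments.
Unset Strict Implicit.
Unset Printing Implicit Defensive.
Import Order.TTheory GRing.Theory Num.Theory.
Local Open Scope ring_scope.

(* A strongly regular graph with mu >= 1 that is not complete has diameter 2,
   so its distance matrix is 2J - 2I - A.  On functions of sum zero the
   adjacency operator satisfies (A - r)(A - s) = 0, where r > s are the roots
   of x^2 - (lam - mu) x - (k - mu); hence <f, Df> = -2|f|^2 - <f, Af> is at
   most -2 - s, with equality on an s-eigenvector, and QEC = -2 - s.
   The projection onto the r-eigenspace has a natural trace m, which gives
   (r - s)(2m + 1 - n) = -(2k + (n - 1)(lam - mu)).  When the right-hand side
   is nonzero, r - s = sqrt((lam - mu)^2 + 4(k - mu)) is rational, hence an
   integer, and a parity argument shows that -2 - s is a natural number. *)

Lemma mxtrace_idem (F : fieldType) n (E : 'M[F]_n) :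
  E *m E = E -> \tr E = (\rank E)%:R.
Proof.
move=> idemE.
move: (col_base E) (row_base E) (col_base_full E) (row_base_free E) (mulmx_base E).
move=> C B fullC freeB CB.
have BC1 : B *m C = 1%:M.
  apply: (row_free_inj freeB); apply: (row_full_inj fullC).
  by rewrite mul1mx !mulmxA CB -mulmxA CB idemE.
by rewrite -[in LHS]CB mxtrace_mulC BC1 mxtrace1.
Qed.

Lemma trace_idem_kernel_nat (F : fieldType) (T : finType) (E : T -> T -> F) :
  (forall x y, \sum_z E x z * E z y = E x y) -> exists m : nat, \sum_x E x x = m%:R.
Proof.
move=> idemE; pose M : 'M[F]_#|T| := \matrix_(i, j) E (enum_val i) (enum_val j).
have idemM : M *m M = M.
  apply/matrixP => i j; rewrite !mxE -idemE (big_enum_val (A := T)).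
  by apply: eq_bigr => l _; rewrite !mxE.
exists (\rank M); rewrite -mxtrace_idem // (big_enum_val (A := T)).
by apply: eq_bigr => i _; rewrite mxE.
Qed.

Lemma natr_rat_sqrt (R : numFieldType) (x : R) (p q n : int) :
  q != 0 -> 0 <= x -> x * q%:~R = p%:~R -> x ^+ 2 = n%:~R -> exists d : nat, x = d%:R.
Proof.
move=> q0 x0 xqp xn; have n0 : 0 <= n by rewrite -(ler0z R) -xn; exact: exprn_ge0.
have {}xn : x ^+ 2 = `|n|%N%:R by rewrite xn -[n in LHS]gez0_abs.
have xqp_abs : x * `|q|%N%:R = `|p|%N%:R.
  by rewrite !natr_absz !intr_norm -(ger0_norm x0) -normrM xqp.
have : (`|q| ^ 2 %| `|p| ^ 2)%N.
  apply/dvdnP; exists `|n|%N; apply/eqP; rewrite -(eqr_nat R) natrM !natrX.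
  by rewrite -xqp_abs -xn exprMn.
rewrite dvdn_pexp2r // => /dvdnP [d pdq]; exists d.
have qR0 : (`|q|%N%:R : R) != 0 by rewrite pnatr_eq0 absz_eq0.
by apply: (mulIf qR0); rewrite xqp_abs pdq natrM.
Qed.

(* (L - d) / 2 is the smaller root of x^2 - L x - M: it is an integer <= -2. *)
Lemma discr_root_sub_even_ge4 (L M d : int) : 0 <= d -> L + 2 <= M ->
  d ^+ 2 = L ^+ 2 + 4 * M -> exists t : nat, d - L = 2 * t%:Z + 4.
Proof.
move=> d0 LM dLM; set u := d - L.
have uL : u * (u + 2 * L) = 4 * M.
  have -> : u * (u + 2 * L) = d ^+ 2 - L ^+ 2 by rewrite /u; ring.
  by rewrite dLM; ring.
have u0 : 0 < u.
  rewrite ltNge; apply/negP => u0.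
  have : u * (u + 2 * L) <= 0 by apply: mulr_le0_ge0 => //; rewrite /u; lia.
  rewrite /u in u0; lia.
have [q [uq|uq]] : exists q : int, u = 2 * q \/ u = 2 * q + 1.
  exists (u %/ 2)%Z; have := divz_eq u 2.
  have := modz_ge0 u (isT : 2 != 0 :> int); have := ltz_mod u (isT : 2 != 0 :> int).
  lia.
- have qM : q * (q + L) = M.
    have : 4 * (q * (q + L)) = 4 * M by rewrite -uL uq; ring.
    set z := q * (q + L); lia.
  have q1 : q != 1 by apply/eqP => q1; rewrite q1 in qM; lia.
  by exists `|q - 2|%N; rewrite uq; lia.
- have : 2 * (2 * q * q + 2 * q + 2 * q * L + L) + 1 = 4 * M by rewrite -uL uq; ring.
  set z := 2 * q * q + 2 * q + 2 * q * L + L; lia.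
Qed.

Lemma sum_natr_pred (R : pzSemiRingType) (T : finType) (P : pred T) :
  \sum_y ((P y)%:R : R) = #|[set y | P y]|%:R.
Proof.
rewrite (eq_bigr (fun y => if P y then 1 else 0)); last by move=> y _; case: (P y).
by rewrite -big_mkcond /= sumr_const cardsE.
Qed.

Lemma card_classic_set (T : finType) (P : pred T) :
  #|[set z | P z]%classic| = #|[set z | P z]|.
Proof. by apply: eq_card => z; rewrite inE /=; apply/idP/idP => [/set_mem|/mem_set]. Qed.

Lemma sup_max (R : realType) (S : set R) (v : R) : S v -> ubound S v -> sup S = v.
Proof.
move=> Sv ubv; apply/eqP; rewrite eq_le ge_sup //=; last by exists v.
by apply: ub_le_sup => //; exists v.
Qed.

Section StronglyRegular.
Variables (R : realType) (T : finType) (e : rel T) (k lam mu : nat).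
Hypothesis e_sym : forall x y, e x y = e y x.
Hypothesis e_irr : forall x, ~~ e x x.
Hypothesis card_nbr : forall x, #|[set y | e x y]| = k.
Hypothesis card_common_adj :
  forall x y, x != y -> e x y -> #|[set z | e x z && e y z]| = lam.
Hypothesis card_common_nadj :
  forall x y, x != y -> ~~ e x y -> #|[set z | e x z && e y z]| = mu.

Definition adj (x y : T) : R := (e x y)%:R.
Definition delta (x y : T) : R := (x == y)%:R.
Definition adjf (f : T -> R) (x : T) : R := \sum_y adj x y * f y.
Definition dot (f g : T -> R) : R := \sum_x f x * g x.

Lemma adjC x y : adj x y = adj y x.
Proof. by rewrite /adj e_sym. Qed.

Lemma adjxx x : adj x x = 0.
Proof. by rewrite /adj (negbTE (e_irr x)). Qed.

Lemma sum_adj x : \sum_y adj x y = k%:R.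
Proof. by rewrite sum_natr_pred card_nbr. Qed.

Lemma sum_adj_l y : \sum_x adj x y = k%:R.
Proof. by rewrite -(sum_adj y); apply: eq_bigr => x _; rewrite adjC. Qed.

Lemma sum_delta_l (F : T -> R) x : \sum_y delta x y * F y = F x.
Proof.
rewrite (bigD1 x) //= /delta eqxx mul1r big1 ?addr0 // => y.
by rewrite eq_sym => /negbTE ->; rewrite mul0r.
Qed.

Lemma sum_delta_r (F : T -> R) x : \sum_y F y * delta y x = F x.
Proof.
by rewrite -[RHS](sum_delta_l F); apply: eq_bigr => y _; rewrite mulrC /delta eq_sym.
Qed.

Lemma sum_delta x : \sum_y delta x y = 1.
Proof. by rewrite -[RHS](sum_delta_l (fun=> 1) x); apply: eq_bigr => y _; rewrite mulr1. Qed.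

Lemma sum_delta_l1 y : \sum_x delta x y = 1.
Proof. by rewrite -[RHS](sum_delta_r (fun=> 1) y); apply: eq_bigr => x _; rewrite mul1r. Qed.

Lemma sum_adj_mul x y : \sum_z adj x z * adj z y =
  k%:R * delta x y + lam%:R * adj x y + mu%:R * (1 - delta x y - adj x y).
Proof.
under eq_bigr do rewrite /adj (e_sym _ y) -natrM mulnb.
rewrite sum_natr_pred /delta /adj; have [<-|nxy] := eqVneq x y.
  have -> : [set z | e x z && e x z] = [set z | e x z].
    by apply/setP => z; rewrite !inE andbb.
  by rewrite (negbTE (e_irr x)) card_nbr /=; ring.
by case exy: (e x y); [rewrite card_common_adj | rewrite card_common_nadj ?exy] => //=; ring.
Qed.

Lemma sum_adjf f : \sum_x adjf f x = k%:R * \sum_x f x.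
Proof.
rewrite exchange_big mulr_sumr; apply: eq_bigr => y _.
by rewrite -mulr_suml sum_adj_l.
Qed.

Lemma dot_adjf f g : dot f (adjf g) = dot (adjf f) g.
Proof.
rewrite /dot /adjf; under eq_bigr do rewrite mulr_sumr.
rewrite exchange_big; apply: eq_bigr => y _.
by rewrite mulr_suml; apply: eq_bigr => x _; rewrite adjC; ring.
Qed.

Lemma adjfB u v c x : adjf (fun y => u y - c * v y) x = adjf u x - c * adjf v x.
Proof.
by rewrite /adjf mulr_sumr -sumrB; apply: eq_bigr => y _; ring.
Qed.

Lemma adjf_adjf f : \sum_x f x = 0 -> forall x,
  adjf (adjf f) x = (k%:R - mu%:R) * f x + (lam%:R - mu%:R) * adjf f x.
Proof.
move=> f0 x; rewrite /adjf; under eq_bigr do rewrite mulr_sumr.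
rewrite exchange_big /=; under eq_bigr do under eq_bigr do rewrite mulrA.
under eq_bigr do rewrite -mulr_suml sum_adj_mul.
rewrite (eq_bigr (fun z => k%:R * (delta x z * f z) + lam%:R * (adj x z * f z)
  + mu%:R * (f z - delta x z * f z - adj x z * f z))); last by move=> z _; ring.
by rewrite !big_split /= -!mulr_sumr !sumrB sum_delta_l f0; ring.
Qed.

Lemma adjf_factor c c' f x : c + c' = lam%:R - mu%:R -> c * c' = mu%:R - k%:R ->
  \sum_y f y = 0 -> adjf (fun y => adjf f y - c * f y) x = c' * (adjf f x - c * f x).
Proof.
move=> cc_add cc_mul f0; rewrite adjfB adjf_adjf // -cc_add.
by rewrite -[k%:R - mu%:R]opprB -cc_mul; ring.
Qed.

Lemma srg_count (x : T) :
  k%:R * k%:R = k%:R + lam%:R * k%:R + mu%:R * (#|T|%:R - 1 - k%:R) :> R.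
Proof.
have := congr1 (fun F => \sum_(y : T) F y) (funext (sum_adj_mul x)) => /=.
rewrite exchange_big /=; under eq_bigr do rewrite -mulr_sumr sum_adj.
rewrite -mulr_suml sum_adj => ->.
by rewrite !big_split /= -!mulr_sumr !sumrB sum_delta sum_adj sumr_const; ring.
Qed.

Hypothesis mu_gt0 : (0 < mu)%N.
Variables x0 y0 : T.
Hypothesis x0y0 : x0 != y0.
Hypothesis nadj_x0y0 : ~~ e x0 y0.

Lemma exists_common_nbr x y : x != y -> ~~ e x y -> exists z, e x z && e y z.
Proof.
move=> nxy nexy; have : (0 < #|[set z | e x z && e y z]|)%N.
  by rewrite card_common_nadj.
by case/card_gt0P => z; rewrite inE; exists z.
Qed.

Lemma card_ge3 : (3 <= #|T|)%N.
Proof.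
have [z /andP [x0z y0z]] := exists_common_nbr x0y0 nadj_x0y0.
have neq_z x : e x z -> x != z by apply: contraTneq => ->; exact: e_irr.
have : uniq [:: x0; y0; z] by rewrite /= !inE negb_or x0y0 !neq_z.
by move/uniq_leq_size => /(_ (enum T) (fun w _ => mem_enum T w)); rewrite cardE.
Qed.

Lemma natr_card_neq0 : #|T|%:R != 0 :> R.
Proof. by rewrite pnatr_eq0 -lt0n (leq_trans _ card_ge3). Qed.

Lemma exists_eq_edge x y : [exists z, (x == z) && e z y] = e x y.
Proof.
by apply/existsP/idP => [[z /andP [/eqP -> //]] | exy]; exists x; rewrite eqxx.
Qed.

Lemma gdist_srg x y : (gdist e x y)%:R = 2 - 2 * delta x y - adj x y :> R.
Proof.
rewrite /gdist; have -> : #|T| = (#|T| - 3).+3 by have := card_ge3; lia.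
rewrite /= !exists_eq_edge /delta /adj.
have [<-|nxy] := eqVneq x y; first by rewrite /= (negbTE (e_irr x)) /=; ring.
case exy: (e x y) => /=; first by ring.
have [z /andP [xz yz]] := exists_common_nbr nxy (negbT exy).
suff -> : [exists z, ((x == z) || [exists w, (x == w) && e w z]) && e z y] by ring.
by apply/existsP; exists z; rewrite exists_eq_edge xz e_sym yz orbT.
Qed.

Lemma distQ_srg f : \sum_x f x = 0 -> distQ e f = - 2 * dot f f - dot f (adjf f).
Proof.
move=> f0; have dist_row x : \sum_y (gdist e x y)%:R * f x * f y =
    2 * (f x * \sum_y f y) - 2 * (f x * f x) - f x * adjf f x.
  transitivity (\sum_y (2 * (f x * f y) - 2 * (f x * (delta x y * f y))
                        - f x * (adj x y * f y))).
    by apply: eq_bigr => y _; rewrite gdist_srg; ring.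
  by rewrite !sumrB -!mulr_sumr sum_delta_l.
rewrite /distQ (eq_bigr _ (fun x _ => dist_row x)) f0 /dot !mulr_sumr -sumrB.
by apply: eq_bigr => x _; ring.
Qed.

Lemma mu_le_k : (mu <= k)%N.
Proof.
rewrite -(card_common_nadj x0y0 nadj_x0y0) -(card_nbr x0).
by apply/subset_leq_card/fintype.subsetP => z; rewrite !inE => /andP [].
Qed.

Lemma lam_add2_le_k : (lam.+2 <= k)%N.
Proof.
have [z /andP [x0z y0z]] := exists_common_nbr x0y0 nadj_x0y0.
have zx0 : z != x0 by apply: contraTneq x0z => ->; exact: e_irr.
have zx0e : e z x0 by rewrite e_sym.
rewrite -(card_nbr z) -(card_common_adj zx0 zx0e).
set Nz := [set y | e z y].
have sub : [set v | e z v && e x0 v] \subset Nz :\ x0 :\ y0.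
  apply/fintype.subsetP => v; rewrite !inE => /andP [-> x0v]; rewrite andbT.
  have -> : v != x0 by apply: contraTneq x0v => ->; exact: e_irr.
  by have -> : v != y0 by apply: contraTneq x0v => ->.
have Nz_x0 : x0 \in Nz by rewrite inE.
have Nz_y0 : y0 \in Nz :\ x0 by rewrite !inE eq_sym x0y0 e_sym.
have := subset_leq_card sub.
by rewrite (cardsD1 x0 Nz) (cardsD1 y0 (Nz :\ x0)) Nz_x0 Nz_y0 !add1n !ltnS.
Qed.

Definition disc : R := (lam%:R - mu%:R) ^+ 2 + 4 * (k%:R - mu%:R).
Definition eig_r : R := (lam%:R - mu%:R + Num.sqrt disc) / 2.
Definition eig_s : R := (lam%:R - mu%:R - Num.sqrt disc) / 2.

Lemma disc_gt0 : 0 < disc.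
Proof.
have lam2k : (lam + 2)%:R <= k%:R :> R by rewrite ler_nat addn2 lam_add2_le_k.
rewrite natrD in lam2k.
have muk : mu%:R <= k%:R :> R by rewrite ler_nat mu_le_k.
have := sqr_ge0 (lam%:R - mu%:R : R); rewrite /disc.
have [muk'|kmu] := ltrP (mu%:R : R) k%:R; first lra.
have sq2 : 4 <= (lam%:R - mu%:R : R) ^+ 2 by rewrite expr2; nra.
lra.
Qed.

Lemma eig_sub : eig_r - eig_s = Num.sqrt disc.
Proof. by rewrite /eig_r /eig_s; field. Qed.

Lemma eig_sub_gt0 : 0 < eig_r - eig_s.
Proof. by rewrite eig_sub sqrtr_gt0 disc_gt0. Qed.

Lemma eig_add : eig_r + eig_s = lam%:R - mu%:R.
Proof. by rewrite /eig_r /eig_s; field. Qed.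

Lemma eig_mul : eig_r * eig_s = mu%:R - k%:R.
Proof.
rewrite /eig_r /eig_s; set L : R := lam%:R - mu%:R.
have -> : (L + Num.sqrt disc) / 2 * ((L - Num.sqrt disc) / 2) =
    (L ^+ 2 - Num.sqrt disc ^+ 2) / 4 by field.
by rewrite sqr_sqrtr ?(ltW disc_gt0) // /disc -/L; field.
Qed.

Lemma dot_adjf_ge f : \sum_x f x = 0 -> eig_s * dot f f <= dot f (adjf f).
Proof.
move=> f0; pose g x := adjf f x - eig_s * f x.
have g_eig x : adjf g x = eig_r * g x.
  by apply: adjf_factor; rewrite ?(addrC eig_s) ?(mulrC eig_s) ?eig_add ?eig_mul.
have dot_gf : dot g f = dot f (adjf f) - eig_s * dot f f.
  by rewrite /dot mulr_sumr -sumrB; apply: eq_bigr => x _; rewrite /g; ring.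
have dot_gg : dot g g = (eig_r - eig_s) * dot g f.
  transitivity (dot g (adjf f) - eig_s * dot g f).
    by rewrite /dot mulr_sumr -sumrB; apply: eq_bigr => x _; rewrite /g; ring.
  rewrite dot_adjf; have -> : dot (adjf g) f = eig_r * dot g f.
    by rewrite /dot mulr_sumr; apply: eq_bigr => x _; rewrite g_eig mulrA.
  by ring.
have : 0 <= dot g g by apply: sumr_ge0 => x _; rewrite -expr2 sqr_ge0.
by rewrite dot_gg dot_gf pmulr_rge0 ?eig_sub_gt0 // subr_ge0.
Qed.

Lemma adjf_delta_sub u v x :
  adjf (fun y => delta y u - delta y v) x = adj x u - adj x v.
Proof. by rewrite /adjf; under eq_bigr do rewrite mulrBr; rewrite sumrB !sum_delta_r. Qed.

Lemma exists_sum0_not_eig_r :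
  exists2 g : T -> R, \sum_x g x = 0 & exists x, adjf g x != eig_r * g x.
Proof.
pose g u v y := delta y u - delta y v.
have g0 u v : \sum_y g u v y = 0 by rewrite sumrB !sum_delta_l1 subrr.
have [r0|r_neq0] := eqVneq eig_r 0.
  have [z /andP [x0z _]] := exists_common_nbr x0y0 nadj_x0y0.
  exists (g x0 z) => //; exists x0.
  by rewrite adjf_delta_sub r0 mul0r adjxx /adj x0z sub0r oppr_eq0 oner_eq0.
exists (g x0 y0) => //; exists x0.
rewrite adjf_delta_sub adjxx /adj (negbTE nadj_x0y0) /g /delta eqxx (negbTE x0y0).
by rewrite subrr subr0 mulr1 eq_sym.
Qed.

Lemma exists_unit_eig_s : exists f : T -> R,
  [/\ dot f f = 1, \sum_x f x = 0 & forall x, adjf f x = eig_s * f x].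
Proof.
have [g g0 [x gx]] := exists_sum0_not_eig_r.
pose h y := adjf g y - eig_r * g y.
have h0 : \sum_y h y = 0 by rewrite sumrB sum_adjf -mulr_sumr g0 !mulr0 subrr.
have h_eig y : adjf h y = eig_s * h y by apply: adjf_factor; rewrite ?eig_add ?eig_mul.
have hh_gt0 : 0 < dot h h.
  rewrite lt_def sumr_ge0 ?andbT => [|y _]; last by rewrite -expr2 sqr_ge0.
  apply: contra gx => /eqP /psumr_eq0P hh.
  have /eqP := hh (fun y _ => sqr_ge0 (h y)) x isT.
  by rewrite mulf_eq0 orbb subr_eq0.
pose c := Num.sqrt (dot h h).
have c_neq0 : c != 0 by rewrite gt_eqF // sqrtr_gt0.
exists (fun y => h y / c); split.
- rewrite /dot (eq_bigr (fun y => h y * h y / c ^+ 2)) => [|y _]; last by field.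
  by rewrite -mulr_suml sqr_sqrtr ?ltW // divff ?gt_eqF.
- by rewrite -mulr_suml h0 mul0r.
- move=> y; rewrite /adjf (eq_bigr (fun z => adj y z * h z / c)) => [|z _].
    by rewrite -mulr_suml -/(adjf h y) h_eig mulrA.
  by rewrite mulrA.
Qed.

Lemma QEC_srg : QEC R e = - 2 - eig_s.
Proof.
apply: sup_max.
  have [f [f1 f0 f_eig]] := exists_unit_eig_s.
  have f_quad : dot f (adjf f) = eig_s * dot f f.
    by rewrite /dot mulr_sumr; apply: eq_bigr => x _; rewrite f_eig mulrCA.
  by exists f; split => //; split => //; rewrite distQ_srg // f_quad f1; ring.
move=> q [f [f1 [f0 ->]]]; change (dot f f = 1) in f1.
by have := dot_adjf_ge f0; rewrite distQ_srg // f1; lra.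
Qed.

Lemma mu_card_eq : mu%:R * #|T|%:R = (k%:R - eig_s) * (k%:R - eig_r).
Proof.
have -> : (k%:R - eig_s) * (k%:R - eig_r) =
    k%:R * k%:R - (eig_r + eig_s) * k%:R + eig_r * eig_s by ring.
by rewrite eig_add eig_mul (srg_count x0); ring.
Qed.

Lemma sum_shifted_adj_mul (s c : R) x y :
  \sum_z (adj x z - s * delta x z - c) * (adj z y - s * delta z y - c) =
  k%:R * delta x y + lam%:R * adj x y + mu%:R * (1 - delta x y - adj x y)
  - 2 * s * adj x y + s ^+ 2 * delta x y - 2 * c * k%:R + 2 * s * c + c ^+ 2 * #|T|%:R.
Proof.
rewrite (eq_bigr (fun z => adj x z * adj z y - s * (adj x z * delta z y) - c * adj x z
    - s * (delta x z * adj z y) + s ^+ 2 * (delta x z * delta z y)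
    + s * c * delta x z - c * adj z y + s * c * delta z y + c ^+ 2)) => [|z _]; last by ring.
rewrite !(big_split, sumrN) /= -!mulr_sumr sum_adj_mul !sum_delta_r !sum_delta_l.
by rewrite sum_adj sum_adj_l sum_delta sum_delta_l1 sumr_const -mulr_natr; ring.
Qed.

(* (A - sI - (k - s)/n J) / (r - s) is the projection onto the r-eigenspace. *)
Definition proj_r (x y : T) : R :=
  (adj x y - eig_s * delta x y - (k%:R - eig_s) / #|T|%:R) / (eig_r - eig_s).

Lemma proj_r_idem x y : \sum_z proj_r x z * proj_r z y = proj_r x y.
Proof.
have D0 : eig_r - eig_s != 0 by rewrite gt_eqF ?eig_sub_gt0.
under eq_bigr do rewrite /proj_r mulrACA -expr2.
rewrite -mulr_suml sum_shifted_adj_mul /proj_r.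
have mu0 : mu%:R != 0 :> R by rewrite pnatr_eq0 -lt0n.
have ks_kr : (k%:R - eig_s) * (k%:R - eig_r) != 0.
  by rewrite -mu_card_eq mulf_neq0 ?natr_card_neq0.
have EN : #|T|%:R = (k%:R - eig_s) * (k%:R - eig_r) / mu%:R.
  by rewrite -mu_card_eq mulrC mulKf.
have El : lam%:R = mu%:R + eig_r + eig_s by rewrite -addrA eig_add; ring.
have Emu : mu%:R = k%:R + eig_r * eig_s by rewrite eig_mul; ring.
rewrite EN El; move: mu0 ks_kr D0; rewrite Emu => mu0 ks_kr D0.
field; move: ks_kr; rewrite mulf_eq0 negb_or => /andP [-> ->].
by rewrite D0 mu0.
Qed.

Lemma mult_eig_r :
  exists m : nat, m%:R * (eig_r - eig_s) = - #|T|%:R * eig_s - (k%:R - eig_s).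
Proof.
have [m trm] := trace_idem_kernel_nat proj_r_idem; exists m; rewrite -trm.
rewrite /proj_r (eq_bigr (fun=> (- eig_s - (k%:R - eig_s) / #|T|%:R) / (eig_r - eig_s))).
  rewrite sumr_const -mulr_natl; field.
  by rewrite natr_card_neq0 gt_eqF ?eig_sub_gt0.
by move=> x _; rewrite adjxx /delta eqxx /=; ring.
Qed.

Lemma sqrt_disc_nat :
  2 * k%:R + (#|T|%:R - 1) * (lam%:R - mu%:R) != 0 :> R ->
  exists d : nat, Num.sqrt disc = d%:R.
Proof.
move=> P_neq0; have [m mD] := mult_eig_r.
pose Q : int := 2 * m%:Z + 1 - #|T|%:Z.
pose P : int := - (2 * k%:Z + (#|T|%:Z - 1) * (lam%:Z - mu%:Z)).
have PR : P%:~R = - (2 * k%:R + (#|T|%:R - 1) * (lam%:R - mu%:R)) :> R.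
  by rewrite /P !(intrD, intrB, intrM, intrN) -!pmulrn.
have QP : Num.sqrt disc * Q%:~R = P%:~R.
  rewrite PR /Q !(intrD, intrB, intrM) -!pmulrn.
  by move: mD; rewrite eig_sub /eig_s; lra.
have Q0 : Q != 0.
  by apply: contra_neq P_neq0 => Q0; apply/eqP; rewrite -oppr_eq0 -PR -QP Q0 mulr0.
apply: (natr_rat_sqrt (n := (lam%:Z - mu%:Z) ^+ 2 + 4 * (k%:Z - mu%:Z)) Q0 (sqrtr_ge0 _) QP).
by rewrite sqr_sqrtr ?(ltW disc_gt0) // /disc !(rmorphXn, intrD, intrN, intrM) -!pmulrn; ring.
Qed.

Lemma eig_s_nat :
  2 * k%:R + (#|T|%:R - 1) * (lam%:R - mu%:R) != 0 :> R ->
  exists t : nat, - 2 - eig_s = t%:R.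
Proof.
move=> /sqrt_disc_nat [d dE].
have d2 : d%:Z ^+ 2 = (lam%:Z - mu%:Z) ^+ 2 + 4 * (k%:Z - mu%:Z).
  apply: (@intr_inj R); rewrite !rmorphXn /= !(intrD, intrN, intrM) -!pmulrn -dE.
  by rewrite sqr_sqrtr ?(ltW disc_gt0) // /disc; ring.
have LM : lam%:Z - mu%:Z + 2 <= k%:Z - mu%:Z by have := lam_add2_le_k; lia.
have [t dt] := discr_root_sub_even_ge4 (le0z_nat d) LM d2; exists t.
move: (congr1 (fun z : int => z%:~R : R) dt) => /=.
by rewrite !(intrD, intrN, intrM) -!pmulrn -dE /eig_s; lra.
Qed.
End StronglyRegular.

Theorem corollary5p3 (R : realType) (T : finType) (e : rel T)
    (n k lam mu : nat) :
  strongly_regular e n k lam mu ->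
  (1 <= mu)%N ->
  (exists x y : T, x != y /\ ~~ e x y) ->
  2 * k%:R + (n%:R - 1) * (lam%:R - mu%:R) != (0 : R) ->
  exists m : nat, QEC R e = m%:R.
Proof.
move=> [[e_sym e_irr] [<- [card_nbr [card_adj card_nadj]]]] mu_gt0.
move=> [x0 [y0 [x0y0 nadj]]] P_neq0.
have nbr x : #|[set y | e x y]| = k by rewrite -(card_classic_set (e x)).
have common_adj x y : x != y -> e x y -> #|[set z | e x z && e y z]| = lam.
  by rewrite -(card_classic_set (fun z => e x z && e y z)); exact: card_adj.
have common_nadj x y : x != y -> ~~ e x y -> #|[set z | e x z && e y z]| = mu.
  by rewrite -(card_classic_set (fun z => e x z && e y z)); exact: card_nadj.
have [t st] := eig_s_nat e_sym e_irr nbr common_adj common_nadj mu_gt0 x0y0 nadj P_neq0.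
by exists t; rewrite (QEC_srg R e_sym e_irr nbr common_adj common_nadj mu_gt0 x0y0 nadj).
Qed.
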